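(* Let $b \ge 1$, $g = 4b^2$, and let $G$ be a gadget of type I or of type II (basic or extended) with designated vertices $p,q$. Then: (1) $G$ contains a $(2,b)$-alternating-path $R_0$ with $s_1(R_0)=t_1(R_0)=p$ and $t_2(R_0)=q$; (2) $\{p,q\}$ is reachable by a directed path inside $G$ from every vertex of $G$.
   Context: Fix an integer $b\ge1$ and set $g:=4b^2$. Each gadget has designated vertices $p,q$ with an arc $(p,q)$. A gadget of type I is a directed cycle of length at least $g$ through the arc $(p,q)$. A basic gadget of type II is a digraph consisting of vertices $p,q,r$ and a directed path $P_1$ from $r$ to $p$ of length at least $2b^2+b-2$ with $q\notin V(P_1)$, such that every vertex of $P_1$ has an arc to $q$. An extended gadget of type II consists of a basic type-II gadget $(p,q,r,P_1)$ together with a directed path $P_2$ of length at least $b$ such that the last vertex of $P_2$ is $r$, $V(P_1)\cap V(P_2)=\{r\}$, $q\notin V(P_2)$, and either there is an arc from the first vertex of $P_2$ to the second vertex of $P_1$, or there is an arc from some vertex of $V(P_1)\setminus\{r\}$ to the first vertex of $P_2$. For integers $a,b\ge1$, an $(a,b)$-alternating-path is an oriented path $R$ consisting of vertices $s_1,\dots,s_a,t_1,\dots,t_a$ and pairwise internally vertex-disjoint directed paths $Q_1,\dots,Q_a,Q'_1,\dots,Q'_{a-1}$, where $Q_i$ goes from $s_i$ to $t_i$ ($1\le i\le a$), $Q'_i$ goes from $s_{i+1}$ to $t_i$ ($1\le i\le a-1$), and $Q_2,\dots,Q_{a-1},Q'_1,\dots,Q'_{a-1}$ each have length at least $b$ ($Q_1$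 or $Q_a$ may have length zero). We write $s_i(R),t_i(R)$ for its vertices. *)

From mathcomp Require Import all_boot.
Set Implicit Arguments. Unset Strict Implicit. Unset Printing Implicit Defensive.

(* P is a directed path from x to y in (V,E): a nonempty duplicate-free
   vertex sequence starting at x, ending at y, consecutive vertices joined
   by arcs. Its length is (size P).-1. *)
Definition dpath (V : eqType) (E : rel V) (P : seq V) (x y : V) : Prop :=
  [/\ P != [::], head x P = x, last x P = y, uniq P & path E x (behead P)].

Definition seq_arc (V : eqType) (s : seq V) (x y : V) : Prop :=
  exists i, i.+1 < size s /\ nth x s i = x /\ nth x s i.+1 = y.

(* (a,b)-alternating path: vertices s_i, t_i (1 <= i <= a), directed paths
   Q i : s_i -> t_i (1 <= i <= a) and Q' i : s_(i+1) -> t_i (1 <= i < a);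
   the union is an oriented path, i.e. the vertex sequence
   Q_1, rev Q'_1, Q_2, rev Q'_2, ..., Q_a (shared endpoints merged) is
   duplicate-free (this gives pairwise internal disjointness);
   Q_2..Q_(a-1) and Q'_1..Q'_(a-1) have length >= b. *)
Definition alt_path (V : eqType) (E : rel V) (a b : nat)
    (s t : nat -> V) (Q Q' : nat -> seq V) : Prop :=
  [/\ (forall i, 1 <= i <= a -> dpath E (Q i) (s i) (t i)),
      (forall i, 1 <= i < a -> dpath E (Q' i) (s i.+1) (t i)),
      (forall i, 2 <= i <= a.-1 -> b <= (size (Q i)).-1),
      (forall i, 1 <= i < a -> b <= (size (Q' i)).-1)
    & uniq (Q 1 ++ flatten [seq behead (rev (Q' i)) ++ behead (Q i.+1)
                           | i <- iota 1 a.-1])].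

(* Type I gadget: the digraph is a directed cycle c (listed in cyclic
   order) of length >= g = 4 b^2 through the arc (p,q). *)
Definition gadgetI (b : nat) (V : finType) (E : rel V) (p q : V) : Prop :=
  exists c : seq V,
    [/\ uniq c, 4 * b ^ 2 <= size c, (forall v, v \in c),
        (forall x y, E x y <-> seq_arc (rcons c (head p c)) x y)
      & seq_arc (rcons c (head p c)) p q].

(* arcs of a basic type II gadget: arcs of P1 and arcs from every vertex
   of P1 to q (this includes the arc (p,q), as p lies on P1). *)
Definition basic_arcs (V : eqType) (P1 : seq V) (q x y : V) : Prop :=
  seq_arc P1 x y \/ (x \in P1 /\ y = q).

Definition basicII_path (b : nat) (V : eqType) (P1 : seq V) (p q r : V) : Prop :=
  [/\ P1 != [::], head r P1 = r, last r P1 = p, uniq P1 &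
      2 * b ^ 2 + b - 2 <= (size P1).-1 /\ q \notin P1].

Definition gadgetII_basic (b : nat) (V : finType) (E : rel V) (p q : V) : Prop :=
  exists (r : V) (P1 : seq V),
    [/\ basicII_path b P1 p q r,
        (forall v, v \in P1 \/ v = q)
      & (forall x y, E x y <-> basic_arcs P1 q x y)].

Definition gadgetII_ext (b : nat) (V : finType) (E : rel V) (p q : V) : Prop :=
  exists (r : V) (P1 P2 : seq V) (x0 y0 : V),
    [/\ basicII_path b P1 p q r,
        [/\ P2 != [::], last r P2 = r, uniq P2, b <= (size P2).-1 &
            (forall v, v \in P1 -> v \in P2 -> v = r) /\ q \notin P2],
        (x0 = head r P2 /\ y0 = nth r P1 1) \/
          (x0 \in P1 /\ x0 != r /\ y0 = head r P2),
        (forall v, [\/ v \in P1, v \in P2 | v = q])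
      & (forall x y, E x y <->
           [\/ basic_arcs P1 q x y, seq_arc P2 x y | x = x0 /\ y = y0])].

From mathcomp Require Import all_boot zify.
Set Implicit Arguments. Unset Strict Implicit. Unset Printing Implicit Defensive.

(* A (2,b)-alternating path with s_1 = t_1 = p only needs a vertex s_2, a
   directed path Q'_1 of length >= b from s_2 to p, and a directed path Q_2
   from s_2 to q meeting Q'_1 only in s_2; Q_1 is the trivial path at p.
   In a type I gadget take s_2 = q, Q'_1 the rest of the cycle and Q_2 trivial.
   In a type II gadget take for Q'_1 the last b arcs of P_1 and for Q_2 the arc
   from s_2 to q.  For reachability, every vertex of a type I gadget reaches p
   along the cycle; in a type II gadget every vertex of P_1 has an arc to q,
   and a vertex of P_2 follows P_2 to r, which lies on P_1. *)

Section DirectedPaths.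
Variables (V : eqType) (E : rel V).
Implicit Types (P s : seq V) (x y z v : V).

Lemma seq_arc_cons a s x y : seq_arc s x y -> seq_arc (a :: s) x y.
Proof. by case=> i [lt_i [xi yi]]; exists i.+1. Qed.

Lemma path_of_seq_arcs a s :
  (forall x y, seq_arc (a :: s) x y -> E x y) -> path E a s.
Proof.
elim: s a => [|c s IHs] a arcsE //=; apply/andP; split.
- by apply: arcsE; exists 0.
- by apply: IHs => x y /(seq_arc_cons a); apply: arcsE.
Qed.

Lemma dpath_of_seq_arcs x0 P : P != [::] -> uniq P ->
  (forall x y, seq_arc P x y -> E x y) -> dpath E P (head x0 P) (last x0 P).
Proof. by case: P => [|a P] //= _ uP /path_of_seq_arcs; split. Qed.

Lemma uniq_cycle_dpath x0 P : P != [::] -> uniq P -> cycle E P ->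
  dpath E P (head x0 P) (last x0 P).
Proof. by case: P => [|a P] //= _ uP; rewrite rcons_path => /andP[aP _]. Qed.

Lemma dpath1 x : dpath E [:: x] x x.
Proof. by []. Qed.

Lemma dpath_arc x y : x != y -> E x y -> dpath E [:: x; y] x y.
Proof. by move=> neq_xy xy; split; rewrite //= ?inE ?neq_xy ?xy. Qed.

Lemma dpath_drop P x y n : dpath E P x y -> n < size P ->
  dpath E (drop n P) (nth x P n) y.
Proof.
elim: n P x => [|n IHn] P x xPy lt_n.
  by rewrite drop0 nth0; have [_ -> _ _ _] := xPy.
case: P xPy lt_n => [|a [|c P]] [//= _ <- last_y uP pP] //= lt_n.
move: uP pP => /andP[_ uP] /andP[_ pP].
by rewrite (set_nth_default c) //; apply: IHn.
Qed.

Lemma dpath_suffix P x y v : dpath E P x y -> v \in P ->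
  dpath E (drop (index v P) P) v y.
Proof.
move=> xPy vP; rewrite -{2}(nth_index x vP).
by apply: dpath_drop; rewrite ?index_mem.
Qed.

Lemma dpath_rcons P x y z : dpath E P x y -> E y z -> z \notin P ->
  dpath E (rcons P z) x z.
Proof.
case: P => [[]//|a P] [_ /= <- last_y uP pP] yz zP; split=> //=.
- by rewrite last_rcons.
- by move: (rcons_uniq (a :: P) z) => /= ->; rewrite zP.
- by rewrite rcons_path pP last_y.
Qed.

End DirectedPaths.

Section AlternatingPaths.
Variables (V : eqType) (E : rel V) (b : nat) (p q : V).

Definition pq_alt_path : Prop :=
  exists (s t : nat -> V) (Q Q' : nat -> seq V),
    [/\ alt_path E 2 b s t Q Q', s 1 = p, t 1 = p & t 2 = q].

Definition pq_reachable : Prop :=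
  forall v, exists (w : V) (P : seq V), (w = p \/ w = q) /\ dpath E P v w.

Lemma pq_alt_path_of_dpaths s2 D Q2 :
  dpath E D s2 p -> dpath E Q2 s2 q -> b <= (size D).-1 ->
  uniq (rev D ++ behead Q2) -> pq_alt_path.
Proof.
move=> Dp Q2q szD uDQ2.
exists (fun i => if i == 1 then p else s2), (fun i => if i == 1 then p else q),
  (fun i => if i == 1 then [:: p] else Q2), (fun=> D).
split=> //; split.
- by case=> [|[|[|i]]].
- by case=> [|[|i]].
- by case=> [|[|[|i]]].
- by case=> [|[|i]].
- have [D0 _ last_p _ _] := Dp.
  case/lastP: D D0 last_p uDQ2 {Dp szD} => [|D x] // _.
  by rewrite last_rcons rev_rcons /= cats0 => ->.
Qed.

Lemma pq_alt_path_of_back_path D :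
  dpath E D q p -> b <= (size D).-1 -> pq_alt_path.
Proof.
move=> Dp szD; have [_ _ _ uD _] := Dp.
by apply: pq_alt_path_of_dpaths Dp (dpath1 E q) szD _; rewrite cats0 rev_uniq.
Qed.

Lemma pq_alt_path_of_fan D r : dpath E D r p -> b <= (size D).-1 ->
  q \notin D -> (forall v, v \in D -> E v q) -> pq_alt_path.
Proof.
move=> Dp szD qD fanE; have [D0 _ _ uD _] := Dp; set n := size D - b.+1.
have lt_n : n < size D by move: D0; rewrite -size_eq0 /n; lia.
have s2D : nth r D n \in D by apply: mem_nth.
apply: pq_alt_path_of_dpaths (dpath_drop Dp lt_n) _ _ _.
- by apply: dpath_arc (fanE _ s2D); apply: contraNneq qD => <-.
- by rewrite size_drop /n; lia.
- rewrite /= cat_uniq rev_uniq drop_uniq //= mem_rev orbF andbT.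
  by apply: contra qD => /mem_drop.
Qed.

End AlternatingPaths.

Lemma seq_arc_closed_rot (V : eqType) (c : seq V) x y :
  seq_arc (rcons c (head x c)) x y ->
  exists n, head x (rot n c) = y /\ last x (rot n c) = x.
Proof.
case=> i []; rewrite size_rcons ltnS => le_i.
rewrite !nth_rcons le_i => -[ci yi].
exists i.+1; split; last first.
  by rewrite /rot last_cat (take_nth x le_i) last_rcons ci.
have [lt_i | le_ci] := ltnP i.+1 (size c).
  by move: yi; rewrite lt_i /rot (drop_nth x lt_i).
have sz_c : size c = i.+1 by apply/eqP; rewrite eqn_leq le_ci le_i.
by move: yi; rewrite sz_c ltnn eqxx -sz_c rot_size.
Qed.

Section Gadgets.
Variables (b : nat) (V : finType) (E : rel V) (p q : V).

Lemma gadgetI_back_path : gadgetI b E p q ->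
  exists D, [/\ dpath E D q p, 4 * b ^ 2 <= size D & forall v, v \in D].
Proof.
case=> c [uc szc allc arcsE /seq_arc_closed_rot [n [head_q last_p]]].
have c0 : c != [::] by apply/eqP=> c0; have := allc p; rewrite c0.
exists (rot n c); rewrite size_rot; split=> // [|v]; last by rewrite mem_rot.
rewrite -last_p -head_q.
apply: uniq_cycle_dpath; rewrite ?rot_uniq ?rot_cycle //.
  by rewrite -size_eq0 size_rot size_eq0.
case: c c0 {uc szc allc head_q last_p} arcsE => [|a c] //= _ arcsE.
by apply: path_of_seq_arcs => x y /arcsE.
Qed.

Lemma gadgetI_alt_path_reachable : gadgetI b E p q ->
  pq_alt_path E b p q /\ pq_reachable E p q.
Proof.
move=> /gadgetI_back_path [D [Dp szD allD]]; split.
  by apply: pq_alt_path_of_back_path Dp _; nia.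
move=> v; exists p, (drop (index v D) D).
by split; [left | apply: dpath_suffix Dp (allD v)].
Qed.

Section TypeII.
Variables (r : V) (P1 : seq V).
Hypothesis P1_basic : basicII_path b P1 p q r.
Hypothesis basicE : forall x y, basic_arcs P1 q x y -> E x y.

Lemma basicII_dpath : dpath E P1 r p.
Proof.
have [P10 head_r last_p uP1 _] := P1_basic; rewrite -{1}head_r -last_p.
by apply: dpath_of_seq_arcs => // x y xy; apply: basicE; left.
Qed.

Lemma basicII_alt_path : pq_alt_path E b p q.
Proof.
have [_ _ _ _ [szP1 qP1]] := P1_basic.
apply: pq_alt_path_of_fan basicII_dpath _ qP1 _; first by nia.
by move=> v vP1; apply: basicE; right.
Qed.

Lemma basicII_arc_q v : v \in P1 -> dpath E [:: v; q] v q.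
Proof.
have [_ _ _ _ [_ qP1]] := P1_basic; move=> vP1.
by apply: dpath_arc; [apply: contraNneq qP1 => <- | apply: basicE; right].
Qed.

Lemma basicII_reach_q v : v \in P1 \/ v = q ->
  exists w P, (w = p \/ w = q) /\ dpath E P v w.
Proof.
case=> [vP1 | ->]; exists q.
- by exists [:: v; q]; split; [right | apply: basicII_arc_q].
- by exists [:: q]; split; [right | apply: dpath1].
Qed.

End TypeII.

Lemma gadgetII_basic_alt_path_reachable : gadgetII_basic b E p q ->
  pq_alt_path E b p q /\ pq_reachable E p q.
Proof.
move=> [r [P1 [P1_basic allV arcsE]]].
have basicE x y : basic_arcs P1 q x y -> E x y by move/arcsE.
split; first exact: basicII_alt_path P1_basic basicE.
by move=> v; apply: (basicII_reach_q P1_basic basicE (allV v)).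
Qed.

Lemma gadgetII_ext_alt_path_reachable : gadgetII_ext b E p q ->
  pq_alt_path E b p q /\ pq_reachable E p q.
Proof.
move=> [r [P1 [P2 [x0 [y0 [P1_basic P2_path _ allV arcsE]]]]]].
have [P20 last_r uP2 _ [_ qP2]] := P2_path.
have basicE x y : basic_arcs P1 q x y -> E x y by move=> xy; apply/arcsE/Or31.
split; first exact: basicII_alt_path P1_basic basicE.
move=> v; have reach_q := basicII_reach_q P1_basic basicE (v := v).
case: (allV v) => [vP1 | vP2 | vq];
  [exact: reach_q (or_introl vP1) | | exact: reach_q (or_intror vq)].
have rP1 : r \in P1.
  have [P10 head_r _ _ _] := P1_basic; rewrite -head_r.
  by case: (P1) P10 => [|a P] //= _; rewrite mem_head.
have P2r : dpath E P2 (head r P2) r.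
  rewrite -{2}last_r; apply: dpath_of_seq_arcs => // x y xy.
  by apply/arcsE/Or32.
exists q, (rcons (drop (index v P2) P2) q); split; first by right.
apply: dpath_rcons (dpath_suffix P2r vP2) _ _.
- by apply: basicE; right.
- by apply: contra qP2 => /mem_drop.
Qed.

End Gadgets.

Theorem lemma2p4 (b : nat) (V : finType) (E : rel V) (p q : V) :
  1 <= b ->
  gadgetI b E p q \/ gadgetII_basic b E p q \/ gadgetII_ext b E p q ->
  (exists (s t : nat -> V) (Q Q' : nat -> seq V),
      [/\ alt_path E 2 b s t Q Q', s 1 = p, t 1 = p & t 2 = q]) /\
  (forall v : V, exists (w : V) (P : seq V), (w = p \/ w = q) /\ dpath E P v w).
Proof.
(* 1 <= b is unused: for b = 0 the length bounds of alt_path are trivial. *)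
move=> _ [gI | [gII | gII]].
- exact: gadgetI_alt_path_reachable.
- exact: gadgetII_basic_alt_path_reachable.
- exact: gadgetII_ext_alt_path_reachable.
Qed.
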